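(* Let $\Lambda$ be an antichain lattice in $\mathbb{Z}^n$ and let $A\subseteq\mathbb{Z}^n$ be a generic $\Lambda$-finite set. Then for each $\alpha\in A$, the set of neighbors of $\alpha$ in $A$ is finite.
   Context: Notation: $\ll$ strict componentwise inequality, $\vee$ componentwise maximum; antichain lattice = subgroup of $\mathbb{Z}^n$ whose distinct elements are pairwise incomparable. $T_\eta=\eta-\mathbb{N}^n$, $T^o_\eta=\{\beta:\beta\ll\eta\}$; the $X$-face ($\emptyset\ne X\subseteq[n]$) of $T_\eta$ is $\{\alpha\in T_\eta:\alpha_i=\eta_i\ \forall i\in X\}$. $A$ is generic if whenever $T^o_\eta\cap A=\emptyset$, each face of $T_\eta$ contains at most one point of $A$. $A$ is $\Lambda$-finite if $A=A+\Lambda$ and $A=A_0+\Lambda$ for some finite $A_0$. A neighbor of $\alpha$ in $A$ is an element $\beta\in A$, $\beta\ne\alpha$, such that $\{\alpha,\beta\}$ is neighborly, i.e. $T^o_{\alpha\vee\beta}\cap A=\emptyset$. *)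

From mathcomp Require Import all_boot all_order all_algebra.
Set Implicit Arguments. Unset Strict Implicit. Unset Printing Implicit Defensive.
Import Order.TTheory GRing.Theory Num.Theory.
Local Open Scope ring_scope.

Definition pt (n : nat) := {ffun 'I_n -> int}.
Definition ptset (n : nat) := pt n -> Prop.

Definition padd n (a b : pt n) : pt n := [ffun i => a i + b i].
Definition psub n (a b : pt n) : pt n := [ffun i => a i - b i].
Definition pzero n : pt n := [ffun _ => 0].
Definition pjoin n (a b : pt n) : pt n := [ffun i => Num.max (a i) (b i)].

Definition ple n (a b : pt n) : Prop := forall i, a i <= b i.
Definition pll n (a b : pt n) : Prop := forall i, a i < b i.

Definition is_subgroup n (L : ptset n) : Prop :=
  L (pzero n) /\ forall x y, L x -> L y -> L (psub x y).

Definition antichain_lattice n (L : ptset n) : Prop :=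
  is_subgroup L /\
  forall x y, L x -> L y -> x <> y -> ~ ple x y /\ ~ ple y x.

Definition psum n (B L : ptset n) : ptset n :=
  fun x => exists a l, B a /\ L l /\ x = padd a l.

Definition set_eq n (B C : ptset n) : Prop := forall x, B x <-> C x.

Definition Lambda_finite n (L A : ptset n) : Prop :=
  set_eq A (psum A L) /\
  exists A0 : seq (pt n), set_eq A (psum (fun a => a \in A0) L).

Definition Tcone n (eta : pt n) : ptset n := fun b => ple b eta.
Definition Topen n (eta : pt n) : ptset n := fun b => pll b eta.

Definition face n (eta : pt n) (X : {set 'I_n}) : ptset n :=
  fun a => Tcone eta a /\ forall i, i \in X -> a i = eta i.

Definition disjoint_sets n (B C : ptset n) : Prop := forall x, B x -> C x -> False.

Definition generic n (A : ptset n) : Prop :=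
  forall eta : pt n, disjoint_sets (Topen eta) A ->
    forall X : {set 'I_n}, X != set0 ->
      forall a b, A a -> A b -> face eta X a -> face eta X b -> a = b.

Definition neighborly n (A : ptset n) (a b : pt n) : Prop :=
  disjoint_sets (Topen (pjoin a b)) A.

Definition neighbor n (A : ptset n) (a b : pt n) : Prop :=
  A b /\ b <> a /\ neighborly A a b.

Definition finite_set n (B : ptset n) : Prop :=
  exists s : seq (pt n), forall x, B x -> x \in s.

(* For fixed alpha, the map b |-> alpha \vee b sends the neighbors of alpha into
   alpha + N^n, and genericity makes it injective with an antichain as image:
   if alpha \vee b <= alpha \vee b' =: D, then b is in T_D but not in T^o_D, so
   some b_i equals D_i, which is alpha_i or b'_i; genericity on that face forces
   b = alpha or b = b'. An antichain in alpha + N^n is finite by Dickson's lemma. *)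
From mathcomp Require Import all_boot all_order all_algebra.
From mathcomp Require Import zify.
From Stdlib Require Import Classical.
Set Implicit Arguments. Unset Strict Implicit. Unset Printing Implicit Defensive.
Import Order.TTheory GRing.Theory Num.Theory.
Local Open Scope ring_scope.

Lemma finite_set_bigcup n (I : eqType) (l : seq I) (P : I -> ptset n) :
  (forall i, i \in l -> finite_set (P i)) ->
  finite_set (fun x => exists2 i, i \in l & P i x).
Proof.
elim: l => [|j l IH] finP; first by exists [::] => x [i].
have [s1 s1P] := finP j (mem_head _ _).
have [s2 s2P] : finite_set (fun x => exists2 i, i \in l & P i x).
  by apply: IH => i il; apply: finP; rewrite inE il orbT.
exists (s1 ++ s2) => x [i]; rewrite inE mem_cat => /orP [/eqP -> Px|il Px].
  by rewrite s1P.
by rewrite (s2P x) ?orbT //; exists i.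
Qed.

Section Dickson.

Variables (n : nat) (alpha : pt n) (f : pt n -> pt n).

Hypothesis f_ge : forall y, ple alpha (f y).

Lemma antichain_frozen_below (K : {set 'I_n}) (S : ptset n) x0 y :
  (forall y y', S y -> S y' -> ple (f y) (f y') -> y = y') ->
  (forall y y' i, S y -> S y' -> i \in K -> f y i = f y' i) ->
  S x0 -> S y -> y != x0 ->
  exists2 i, i \in ~: K & (absz (f y i - alpha i) < absz (f x0 i - alpha i))%N.
Proof.
move=> f_anti f_frozen Sx0 Sy /eqP y_ne; apply: NNPP => noi.
apply/y_ne/esym/f_anti => // i; rewrite leNgt; apply/negP => lt_yx0.
have ge_y := f_ge y i; have ge_x0 := f_ge x0 i.
apply: noi; exists i; last by lia.
rewrite inE; apply: contraTN lt_yx0 => iK.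
by rewrite (f_frozen _ _ _ Sy Sx0 iK) ltxx.
Qed.

Lemma finite_antichain_frozen k (K : {set 'I_n}) (S : ptset n) :
  (#|~: K| <= k)%N ->
  (forall y y', S y -> S y' -> ple (f y) (f y') -> y = y') ->
  (forall y y' i, S y -> S y' -> i \in K -> f y i = f y' i) ->
  finite_set S.
Proof.
elim: k K S => [|k IH] K S cardK f_anti f_frozen;
  (case: (classic (exists x0, S x0)) => [[x0 Sx0]|S0];
    last by exists [::] => x Sx; case: S0; exists x);
  have below := antichain_frozen_below f_anti f_frozen Sx0.
- exists [:: x0] => y Sy; rewrite inE; apply: contraT => /(below _ Sy) [i iK _].
  have : (0 < #|~: K|)%N by apply/card_gt0P; exists i.
  by rewrite lt0n -leqn0 cardK.
pose P i m y := S y /\ f y i = alpha i + m%:Z.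
have [s sP] : finite_set (fun y => exists2 i, i \in enum (~: K) &
    exists2 m, m \in iota 0 `|f x0 i - alpha i|%N & P i m y).
  apply: finite_set_bigcup => i; rewrite mem_enum => iK.
  apply: finite_set_bigcup => m _; apply: (IH (i |: K)).
  - have : (#|~: (i |: K)| < #|~: K|)%N.
      apply: proper_card; apply/properP; split; first by rewrite setCS subsetUr.
      by exists i => //; rewrite !inE eqxx.
    by move=> lt; rewrite -ltnS (leq_trans lt cardK).
  - by move=> y y' [Sy _] [Sy' _]; exact: f_anti.
  - move=> y y' j [Sy e] [Sy' e']; rewrite !inE => /orP [/eqP ->|jK].
      by rewrite e e'.
    exact: f_frozen.
exists (x0 :: s) => y Sy; rewrite inE; case: eqVneq => //= ne.
have [i iK lt] := below y Sy ne.
rewrite (sP y) //; exists i; first by rewrite mem_enum.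
exists `|f y i - alpha i|%N; first by rewrite mem_iota.
by split=> //; have := f_ge y i; lia.
Qed.

Lemma finite_antichain_above (S : ptset n) :
  (forall y y', S y -> S y' -> ple (f y) (f y') -> y = y') -> finite_set S.
Proof.
move=> f_anti; apply: (@finite_antichain_frozen _ set0) => //.
by move=> y y' i _ _; rewrite inE.
Qed.

End Dickson.

Lemma generic_face_eq n (A : ptset n) (eta c d : pt n) (i : 'I_n) :
  generic A -> disjoint_sets (Topen eta) A -> A c -> A d ->
  ple c eta -> ple d eta -> c i = eta i -> d i = eta i -> c = d.
Proof.
move=> genA openA Ac Ad c_le d_le ci di.
have i_ne0 : [set i] != set0 by apply/set0Pn; exists i; rewrite inE.
by apply: (genA eta openA [set i] i_ne0) => //; split=> // j /set1P ->.
Qed.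

Lemma ple_pjoinl n (a b : pt n) : ple a (pjoin a b).
Proof. by move=> i; rewrite ffunE le_max lexx. Qed.

Lemma ple_pjoinr n (a b : pt n) : ple b (pjoin a b).
Proof. by move=> i; rewrite ffunE le_max lexx orbT. Qed.

Lemma neighbor_pjoin_anti n (A : ptset n) (alpha b b' : pt n) :
  generic A -> A alpha -> neighbor A alpha b -> neighbor A alpha b' ->
  ple (pjoin alpha b) (pjoin alpha b') -> b = b'.
Proof.
move=> genA Aalpha [Ab [b_ne _]] [Ab' [_ open_b']] join_le.
set D := pjoin alpha b' in open_b' join_le.
have b_le : ple b D by move=> i; apply: le_trans (join_le i); apply: ple_pjoinr.
have [/forallP b_lt|/forallPn [i]] := boolP [forall i, b i < D i].
  by case: (open_b' b b_lt Ab).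
rewrite -leNgt => D_le; have bi : b i = D i by apply/eqP; rewrite eq_le b_le.
have : D i = alpha i \/ D i = b' i by rewrite /D ffunE; lia.
have face_eq := generic_face_eq genA open_b'.
case=> Di; last exact: (face_eq _ _ _ Ab Ab' b_le (ple_pjoinr _ _) bi (esym Di)).
by case: b_ne; apply: (face_eq _ _ _ Ab Aalpha b_le (ple_pjoinl _ _) bi (esym Di)).
Qed.

Theorem mainTheorem14 (n : nat) (L A : ptset n) :
  antichain_lattice L -> generic A -> Lambda_finite L A ->
  forall alpha, A alpha -> finite_set (neighbor A alpha).
Proof.
move=> _ genA _ alpha Aalpha.
apply: (finite_antichain_above (@ple_pjoinl n alpha)) => b b' nb nb'.
exact: (neighbor_pjoin_anti genA Aalpha).
Qed.
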